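(* Let $n\ge3$, $i\in[n-2]$, and $m=n-i-1$. Let $p_{i,n}$ be the number of words $u$ of length $i$ with $i$ distinct letters from $[n]$ such that $[n]\setminus{\rm alph}(u)$ is periodic. Then $$p_{i,n}=\frac{q_{n,m}}{2}\,(r_{n,m}+i+1)\, i!,$$ where $q_{n,m}$ and $r_{n,m}$ are the quotient and remainder of the division of $n$ by $m$.
   Context: $[n]=\{1,\ldots,n\}$; ${\rm alph}(u)$ is the set of letters of $u$. A finite set $A\subset\mathbb P$ with $|A|\ge2$ is periodic if the differences between consecutive elements (in increasing order) are all equal. For integers $l$ and $m\ne0$, $l=q_{l,m}m+r_{l,m}$ with $0\le r_{l,m}<m$. *)

From mathcomp Require Import all_boot.
Set Implicit Arguments. Unset Strict Implicit. Unset Printing Implicit Defensive.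

Definition periodic_seq (s : seq nat) : bool :=
  (2 <= size s) &&
  all (fun k => nth 0 s k.+1 - nth 0 s k == nth 0 s 1 - nth 0 s 0)
      (iota 0 (size s).-1).

(* The letter x : 'I_n stands for the integer x+1 of [n] = {1,...,n}. *)
Definition letter n (x : 'I_n) : nat := (val x).+1.

Definition periodic_set n (A : {set 'I_n}) : bool :=
  periodic_seq (sort leq [seq letter x | x in A]).

Definition alph n i (u : i.-tuple 'I_n) : {set 'I_n} := [set x in u].

Definition p_count (n i : nat) : nat :=
  #|[set u : i.-tuple 'I_n | uniq u &&
       periodic_set (~: alph u)]|.

From mathcomp Require Import all_boot.
From mathcomp Require Import zify.
Set Implicit Arguments. Unset Strict Implicit. Unset Printing Implicit Defensive.

(* Complements of alphabets of injective words of length i are exactly the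
   sets of size m+1, and each such set is the complement of i! words.  A
   periodic set of size m+1 is an arithmetic progression a, a+d, ..., a+md,
   determined by its first term a and step d >= 1 subject to a + md <= n, so
   there are sum_{d >= 1} (n - md)^+ of them.  With n = qm + r the nonzero
   terms are r, r+m, ..., r+(q-1)m, whose sum is q(2r + (q-1)m)/2 =
   q(r + n - m)/2 = q(r + i + 1)/2. *)

Definition letters n (A : {set 'I_n}) : seq nat := sort leq [seq letter x | x in A].

Lemma mem_letters n (A : {set 'I_n}) (y : 'I_n) : (y.+1 \in letters A) = (y \in A).
Proof.
rewrite /letters mem_sort; apply/imageP/idP => [[z zA /eqP]|yA]; last by exists y.
by rewrite /letter eqSS => /eqP/val_inj ->.
Qed.

Lemma lettersP n (A : {set 'I_n}) k :
  k \in letters A -> exists2 y : 'I_n, y \in A & k = y.+1.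
Proof. by rewrite /letters mem_sort => /imageP [y yA ->]; exists y. Qed.

Lemma letters_sorted n (A : {set 'I_n}) : sorted ltn (letters A).
Proof.
rewrite ltn_sorted_uniq_leq sort_uniq sort_sorted ?andbT; last exact: leq_total.
rewrite map_inj_uniq ?enum_uniq // => x y /eqP; rewrite /letter eqSS => /eqP.
exact: val_inj.
Qed.

Lemma size_letters n (A : {set 'I_n}) : size (letters A) = #|A|.
Proof. by rewrite /letters size_sort size_map -cardE. Qed.

Lemma letters_inj n : injective (@letters n).
Proof. by move=> A B eAB; apply/setP => y; rewrite -!mem_letters eAB. Qed.

Definition arith_seq a d k : seq nat := mkseq (fun j => a + j * d) k.

Lemma arith_seq_sorted a d k : 0 < d -> sorted ltn (arith_seq a d k).
Proof.
move=> d_gt0; apply: homo_sorted (iota_ltn_sorted 0 k).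
by move=> x y /= xy; rewrite ltn_add2l ltn_pmul2r.
Qed.

Lemma mem_arith_seq a d k z : (z \in arith_seq a d k) = [exists j : 'I_k, z == a + j * d].
Proof.
apply/idP/existsP => [/mapP[j]|[j /eqP ->]].
  by rewrite mem_iota add0n => /andP[_ jk] ->; exists (Ordinal jk).
by apply/mapP; exists (val j); rewrite ?mem_iota ?add0n ?ltn_ord.
Qed.

Lemma periodic_seq_arith (s : seq nat) :
  sorted ltn s -> periodic_seq s ->
  s = arith_seq (nth 0 s 0) (nth 0 s 1 - nth 0 s 0) (size s).
Proof.
move=> s_sorted /andP[s_ge2 /allP s_steps].
set a := nth 0 s 0; set d := nth 0 s 1 - a.
have nth_lt k : k.+1 < size s -> nth 0 s k < nth 0 s k.+1.
  by move=> ks; apply: (sorted_ltn_nth ltn_trans 0 s_sorted); rewrite ?inE // ltnW.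
have nthS k : k.+1 < size s -> nth 0 s k.+1 = nth 0 s k + d.
  move=> ks; have k_in : k \in iota 0 (size s).-1 by rewrite mem_iota; lia.
  by have /eqP := s_steps k k_in; have := nth_lt k ks; have := nth_lt 0 s_ge2; lia.
have nth_arith j : j < size s -> nth 0 s j = a + j * d.
  elim: j => [|j IH] js; first by rewrite mul0n addn0.
  by rewrite nthS // IH ?(ltnW js) // mulSn; lia.
apply: (@eq_from_nth _ 0); first by rewrite size_mkseq.
by move=> j js; rewrite nth_mkseq // nth_arith.
Qed.

Section Progressions.

Variables n m : nat.

(* The parameter p = (a, d - 1) encodes the progression a+1, a+1+d, ..., a+1+md
   of letters; the shift by one makes every step positive. *)
Definition progression (p : 'I_n * 'I_n) : {set 'I_n} :=
  [set y : 'I_n | [exists j : 'I_m.+1, val y == p.1 + j * p.2.+1]].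

Definition progression_params : {set 'I_n * 'I_n} :=
  [set p : 'I_n * 'I_n | p.1 + m * p.2.+1 < n].

Lemma letters_progression p : p \in progression_params ->
  letters (progression p) = arith_seq p.1.+1 p.2.+1 m.+1.
Proof.
rewrite inE => p_ok.
apply: (irr_sorted_eq ltn_trans ltnn) (letters_sorted _) (arith_seq_sorted _ _ _) _ => // k.
rewrite mem_arith_seq; apply/idP/existsP => [|[j /eqP k_eq]].
  by case/lettersP => y; rewrite inE => /existsP[j /eqP y_eq] ->; exists j; rewrite y_eq.
have k_lt : k.-1 < n.
  by rewrite k_eq addSn /= (leq_ltn_trans _ p_ok) // leq_add2l leq_mul2r -ltnS ltn_ord orbT.
have -> : k = (Ordinal k_lt).+1 by rewrite /= k_eq.
by rewrite mem_letters inE; apply/existsP; exists j; rewrite /= k_eq.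
Qed.

Lemma card_progression p : p \in progression_params -> #|progression p| = m.+1.
Proof. by move=> p_ok; rewrite -size_letters letters_progression // size_mkseq. Qed.

Hypothesis m_gt0 : 0 < m.

Lemma periodic_progression p : p \in progression_params -> periodic_set (progression p).
Proof.
move=> p_ok; rewrite /periodic_set -/(letters _) letters_progression //.
rewrite /periodic_seq size_mkseq ltnS m_gt0; apply/allP => k.
rewrite mem_iota add0n => /andP[_ km]; rewrite !nth_mkseq ?ltnS ?(ltnW km) //.
apply/eqP; lia.
Qed.

Lemma periodic_setP (A : {set 'I_n}) : periodic_set A -> #|A| = m.+1 ->
  exists2 p, p \in progression_params & A = progression p.
Proof.
move=> A_per A_card; have s_sorted := letters_sorted A.
have s_size : size (letters A) = m.+1 by rewrite size_letters.
move: A_per; rewrite /periodic_set -/(letters A) => s_per.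
have := periodic_seq_arith s_sorted s_per; rewrite s_size.
set a := nth 0 _ 0; set d := _ - a => s_eq.
have d_gt0 : 0 < d.
  by rewrite subn_gt0 (sorted_ltn_nth ltn_trans) // inE s_size // ltnS.
have [y0 _ a_eq] : exists2 y : 'I_n, y \in A & a = y.+1.
  by apply: lettersP; rewrite mem_nth // s_size.
have [y1 _ last_eq] : exists2 y : 'I_n, y \in A & a + m * d = y.+1.
  by apply: lettersP; rewrite s_eq mem_arith_seq; apply/existsP; exists ord_max; rewrite mulnC.
have d_lt : d.-1 < n.
  have : d <= m * d by rewrite leq_pmull.
  by have := ltn_ord y1; lia.
have p_ok : (y0, Ordinal d_lt) \in progression_params.
  by rewrite inE /= (prednK d_gt0); have := ltn_ord y1; lia.
exists (y0, Ordinal d_lt) => //; apply: letters_inj.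
by rewrite letters_progression //= s_eq -a_eq prednK.
Qed.

Lemma progression_inj : {in progression_params &, injective progression}.
Proof.
move=> [x y] [x' y'] p_ok q_ok /(congr1 (@letters n)).
rewrite !letters_progression // => e.
have := congr1 (nth 0 ^~ 1) e; have := congr1 (nth 0 ^~ 0) e.
rewrite /arith_seq !nth_mkseq // => e0 e1.
by congr pair; apply: val_inj; simpl in *; lia.
Qed.

Lemma card_periodic_sets :
  #|[set A : {set 'I_n} | periodic_set A && (#|A| == m.+1)]| = #|progression_params|.
Proof.
rewrite -(card_in_imset progression_inj); apply: eq_card => A.
rewrite inE; apply/andP/imsetP => [[A_per /eqP A_card]|[p p_ok ->]].
  by have [p p_ok ->] := periodic_setP A_per A_card; exists p.
by rewrite periodic_progression // card_progression.
Qed.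

End Progressions.

Lemma sum_ord_ltn N K : \sum_(x < N) (x < K) = minn K N.
Proof.
elim: N => [|N IH]; first by rewrite big_ord0 minn0.
by rewrite big_ord_recr /= IH; case: ltnP; lia.
Qed.

Lemma card_progression_params n m :
  #|progression_params n m| = \sum_(d < n) (n - m * d.+1).
Proof.
rewrite -sum1_card (eq_bigl (fun p : 'I_n * 'I_n => true && (p.1 + m * p.2.+1 < n)));
  last by move=> p; rewrite inE.
rewrite -(pair_big_dep xpredT (fun (x d : 'I_n) => val x + m * d.+1 < n) (fun _ _ => 1)) /=.
under eq_bigr => x _ do rewrite big_mkcond /=.
rewrite exchange_big /=; apply: eq_bigr => d _.
rewrite -[RHS](minn_idPl (leq_subr (m * d.+1) n)) -sum_ord_ltn.
by apply: eq_bigr => x _; case: ifP; lia.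
Qed.

Lemma sum_arith_progression q m r :
  2 * \sum_(0 <= e < q) (e * m + r) + q * m = q * (q * m + 2 * r).
Proof.
elim: q => [|q IH]; first by rewrite big_geq.
by rewrite big_nat_recr //=; nia.
Qed.

Lemma sum_sub_multiples n m : 0 < m -> m <= n ->
  2 * \sum_(d < n) (n - m * d.+1) = n %/ m * (n %% m + n - m).
Proof.
move=> m_gt0 m_le_n.
set q := n %/ m; set r := n %% m.
have n_eq : n = q * m + r by rewrite /q /r -divn_eq.
have q_le : q <= n by rewrite /q leq_div.
rewrite -(big_mkord xpredT (fun d => n - m * d.+1)).
rewrite (@big_cat_nat _ _ _ q 0 n _ _ (leq0n q) q_le) /=.
rewrite [X in _ + X]big1_seq ?addn0; last first.
  move=> d /andP[_]; rewrite mem_index_iota => /andP[qd _].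
  have : m * q.+1 <= m * d.+1 by rewrite leq_mul2l ltnS qd orbT.
  by have := ltn_pmod n m_gt0; nia.
rewrite (@eq_big_nat _ _ _ 0 q _ (fun d => (q - d.+1) * m + r)); last first.
  by move=> d /andP[_ dq]; rewrite n_eq mulnBl; nia.
rewrite big_nat_rev /= add0n (@eq_big_nat _ _ _ 0 q _ (fun e => e * m + r)); last first.
  by move=> e /andP[_ eq]; congr (_ * _ + _); lia.
by have := sum_arith_progression q m r; nia.
Qed.

Lemma card_alph n i (u : i.-tuple 'I_n) : uniq u -> #|alph u| = i.
Proof. by move=> u_uniq; rewrite /alph cardsE (card_uniqP u_uniq) size_tuple. Qed.

Lemma card_words_of_alph n i (S : {set 'I_n}) : #|S| = i ->
  #|[set u : i.-tuple 'I_n | uniq u & alph u == S]| = i`!.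
Proof.
move=> S_card.
transitivity #|[set u : i.-tuple 'I_n | all (fun x => x \in S) u & uniq u]|; last first.
  by rewrite card_uniq_tuples -ffactnn -S_card.
apply: eq_card => u; rewrite !inE andbC; apply: andb_id2r => u_uniq.
apply/eqP/allP => [<- x xu|u_in_S]; first by rewrite /alph inE.
apply/eqP; rewrite eqEcard card_alph // S_card leqnn andbT.
by apply/subsetP => x; rewrite inE => /u_in_S.
Qed.

Lemma p_count_periodic_sets n i m : n = m.+1 + i ->
  p_count n i = #|[set A : {set 'I_n} | periodic_set A && (#|A| == m.+1)]| * i`!.
Proof.
move=> n_eq; rewrite /p_count -sum1_card.
rewrite (partition_big (@alph n i) (fun S => periodic_set (~: S) && (#|S| == i))); last first.
  by move=> u; rewrite inE => /andP[u_uniq u_per]; rewrite u_per card_alph ?eqxx.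
rewrite /= (eq_bigr (fun _ => i`!)); last first.
  move=> S /andP[S_per /eqP S_card]; rewrite -(card_words_of_alph S_card) -sum1_card.
  by apply: eq_bigl => u; rewrite !inE -andbA; case: eqP => [->|_]; rewrite ?S_per ?andbF.
rewrite sum_nat_const; congr (_ * _).
rewrite -(card_imset _ (@setC_inj _)); apply: eq_card => A; rewrite inE.
apply/imsetP/andP => [[S /andP[S_per /eqP S_card] ->]|[A_per /eqP A_card]].
  by split=> //; rewrite cardsCs setCK card_ord S_card; apply/eqP; lia.
exists (~: A); last by rewrite setCK.
by rewrite unfold_in /= setCK A_per cardsCs setCK card_ord A_card; apply/eqP; lia.
Qed.

Theorem mainTheorem9 (n i m : nat) :
  3 <= n -> 1 <= i -> i <= n - 2 -> m = n - i - 1 ->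
  2 * p_count n i = (n %/ m) * ((n %% m) + i + 1) * i`!.
Proof.
move=> n_ge3 i_ge1 i_le m_eq.
have m_gt0 : 0 < m by lia.
have n_eq : n = m.+1 + i by lia.
rewrite (p_count_periodic_sets n_eq) (card_periodic_sets n m_gt0).
rewrite card_progression_params mulnA sum_sub_multiples //; last by lia.
by congr (_ * _ * _); lia.
Qed.
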